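(* Let $n>4$ and let $\phi:\mathrm{Aut}(F_n)\to\mathrm{Diff}^2_+(S^1)$ be a homomorphism. For $i\neq j$ put $a_{ij}=\phi(A_{ij})$ and $b_{ij}=\phi(B_{ij})$. Then each of the diffeomorphisms $a_{ij}$ and $b_{ij}$ has a fixed point.
   Context: $F_n$ is the free group with basis $e_1,\dots,e_n$. For $i\neq j$, $A_{ij}\in\mathrm{Aut}(F_n)$ is defined by $A_{ij}(e_i)=e_ie_j$ and $A_{ij}(e_k)=e_k$ for $k\neq i$, and $B_{ij}\in\mathrm{Aut}(F_n)$ by $B_{ij}(e_i)=e_je_i$ and $B_{ij}(e_k)=e_k$ for $k\neq i$. $\mathrm{Diff}^2_+(S^1)$ is the group of orientation-preserving $C^2$ diffeomorphisms of $S^1$. *)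

From Stdlib Require Import Reals ZArith.
From Coquelicot Require Import Coquelicot.
From HB Require Import structures.
From mathcomp Require Import all_boot.

Set Implicit Arguments.
Unset Strict Implicit.
Unset Printing Implicit Defensive.

(* A letter (i, false) is e_i, a letter (i, true) is e_i^{-1}. *)
Definition letter (n : nat) := ('I_n * bool)%type.
Definition word (n : nat) := seq (letter n).

Definition push n (x : letter n) (w : word n) : word n :=
  match w with
  | y :: t => if (y.1 == x.1) && (y.2 != x.2) then t else x :: w
  | [::] => [:: x]
  end.

Definition norm n (w : word n) : word n := foldr (@push n) [::] w.

Definition reducedb n (w : word n) : bool := norm w == w.

Record FG (n : nat) := MkFG { fgw : word n; _ : reducedb fgw }.

HB.instance Definition _ n := [isSub for (@fgw n)].
HB.instance Definition _ n := [Equality of FG n by <:].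

Definition fg1 n : FG n := @MkFG n [::] (eqxx _).

Definition fgmul n (u v : FG n) : FG n := insubd (fg1 n) (norm (fgw u ++ fgw v)).

Definition gen n (i : 'I_n) : FG n := insubd (fg1 n) [:: (i, false)].

(* Group composition in Aut(F_n) is function composition f \o g. *)
Definition is_aut n (f : FG n -> FG n) : Prop :=
  (forall u v, f (fgmul u v) = fgmul (f u) (f v)) /\ bijective f.

Definition is_Aij n (i j : 'I_n) (f : FG n -> FG n) : Prop :=
  is_aut f /\ f (gen i) = fgmul (gen i) (gen j) /\
  (forall k, k <> i -> f (gen k) = gen k).

Definition is_Bij n (i j : 'I_n) (f : FG n -> FG n) : Prop :=
  is_aut f /\ f (gen i) = fgmul (gen j) (gen i) /\
  (forall k, k <> i -> f (gen k) = gen k).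

Open Scope R_scope.

Definition is_C2 (h : R -> R) : Prop :=
  forall x, ex_derive h x /\ ex_derive (Derive h) x /\
            continuous (Derive (Derive h)) x.

(* h : R -> R is a lift of an element of Diff^2_+(S^1). *)
Definition diff2_lift (h : R -> R) : Prop :=
  is_C2 h /\ (forall x, 0 < Derive h x) /\ (forall x, h (x + 1) = h x + 1).

(* The circle map with lift h has a fixed point on S^1 = R/Z. *)
Definition circ_fixed_point (h : R -> R) : Prop :=
  exists (x : R) (k : Z), h x = x + IZR k.

(* Fix a third index k and write T_pq for A_pq (or for B_pq).  In Aut(F_n) the
   automorphisms T_kj and T_ki are conjugates of T_ij by permutations of the basis, and
     T_ij T_kj = T_kj T_ij,      T_ki (T_ij T_kj) T_ki^-1 = T_ij.
   The images a, b, c of T_ij, T_kj, T_ki under phi are lifts to R that satisfy these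
   relations up to integer translations, so their translation numbers satisfy
   tau(a) - tau(b) in Z, tau(ab) = tau(a) + tau(b) and tau(ab) - tau(a) in Z.  Hence tau(a)
   is an integer, and a circle map with integral translation number has a fixed point.
   Translation numbers are never formed: the relations pin a^N(0) within a bounded distance
   of N q for an integer q, whereas without fixed points the displacement a(x) - x stays
   uniformly away from the integers, so a^N(0) drifts linearly away from every N q. *)

From Stdlib Require Import Reals ZArith Lra Lia FunctionalExtensionality Classical_Prop.
From Coquelicot Require Import Coquelicot.
From mathcomp Require Import all_boot fingroup perm.

Set Implicit Arguments.
Unset Strict Implicit.
Unset Printing Implicit Defensive.

Section FreeGroup.
Variable n : nat.
Implicit Types (x : letter n) (u w : word n) (g h : FG n) (f : FG n -> FG n) (s : {perm 'I_n}).
Local Notation "g * h" := (fgmul g h).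
Local Notation "1" := (fg1 n).

Definition letter_inv x : letter n := (x.1, ~~ x.2).

Lemma letter_invK : involutive letter_inv.
Proof. by case=> i b; rewrite /letter_inv negbK. Qed.

Definition reduced w := sorted (fun x y => y != letter_inv x) w.

Lemma pushE x w :
  push x w = if w is y :: t then (if y == letter_inv x then t else x :: w) else [:: x].
Proof. by case: w => // -[j c] t; case: x => i b; rewrite /= xpair_eqE; case: b; case: c. Qed.

Lemma reduced_push x w : reduced w -> reduced (push x w).
Proof.
rewrite pushE; case: w => // y t red_yt.
by case: ifP => [_|/negbT y_x]; [exact: path_sorted red_yt | rewrite /= y_x].
Qed.

Lemma reduced_norm w : reduced (norm w).
Proof. by elim: w => //= x w; apply: reduced_push. Qed.

Lemma push_reduced x w : reduced (x :: w) -> push x w = x :: w.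
Proof. by rewrite pushE; case: w => // y t /andP[/negbTE->]. Qed.

Lemma norm_reduced w : reduced w -> norm w = w.
Proof.
elim: w => // x w IHw red_xw.
by rewrite /= IHw ?push_reduced //; apply: path_sorted red_xw.
Qed.

Lemma push_letter_invK x w : reduced w -> push x (push (letter_inv x) w) = w.
Proof.
rewrite [push (letter_inv x) w]pushE letter_invK.
case: w => [|y t] red_w; first by rewrite pushE eqxx.
case: eqP => [<-|_]; first exact: push_reduced.
by rewrite pushE eqxx.
Qed.

Definition push_word u w := foldr (@push n) w u.

Lemma push_word_nil u : push_word u [::] = norm u.
Proof. by []. Qed.

Lemma norm_cat u w : norm (u ++ w) = push_word u (norm w).
Proof. exact: foldr_cat. Qed.

Lemma reduced_push_word u w : reduced w -> reduced (push_word u w).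
Proof. by elim: u => //= x u IHu /IHu; apply: reduced_push. Qed.

Lemma push_word_push x u w : reduced w -> push_word (push x u) w = push x (push_word u w).
Proof.
move=> red_w; rewrite pushE; case: u => // y t.
by case: eqP => [->|_] //=; rewrite push_letter_invK // reduced_push_word.
Qed.

Lemma push_word_norm u w : reduced w -> push_word (norm u) w = push_word u w.
Proof. by move=> red_w; elim: u => //= x u IHu; rewrite push_word_push // IHu. Qed.

Definition word_inv u := rev (map letter_inv u).

Lemma word_invK : involutive word_inv.
Proof. by move=> u; rewrite /word_inv map_rev revK (mapK letter_invK). Qed.

Lemma push_word_inv u w : reduced w -> push_word u (push_word (word_inv u) w) = w.
Proof.
elim: u w => //= x u IHu w red_w.
rewrite /word_inv map_cons rev_cons -cats1 /push_word foldr_cat /=.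
by rewrite -/(push_word _ _) IHu ?push_letter_invK ?reduced_push.
Qed.

Lemma norm_cat_word_inv u : norm (u ++ word_inv u) = [::].
Proof. by rewrite norm_cat -push_word_nil push_word_inv. Qed.

Definition fg_of_word w : FG n := insubd 1 (norm w).

Lemma fgw_of_word w : fgw (fg_of_word w) = norm w.
Proof. by rewrite /fg_of_word insubdK // unfold_in /reducedb norm_reduced ?reduced_norm. Qed.

Lemma reduced_fgw g : reduced (fgw g).
Proof. by case: g => w /= /eqP <-; apply: reduced_norm. Qed.

Lemma fgwK g : fg_of_word (fgw g) = g.
Proof. by apply: val_inj; rewrite /= fgw_of_word norm_reduced ?reduced_fgw. Qed.

Lemma fg_of_word_norm w : fg_of_word (norm w) = fg_of_word w.
Proof. by apply: val_inj; rewrite /= !fgw_of_word norm_reduced ?reduced_norm. Qed.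

Lemma fgw_mul g h : fgw (g * h) = norm (fgw g ++ fgw h).
Proof. exact: fgw_of_word. Qed.

Lemma fg_of_word_cat u w : fg_of_word (u ++ w) = fg_of_word u * fg_of_word w.
Proof.
apply: val_inj; rewrite /= fgw_mul !fgw_of_word !norm_cat.
by rewrite (norm_reduced (reduced_norm w)) push_word_norm ?reduced_norm.
Qed.

Lemma fg_of_word_nil : fg_of_word [::] = 1.
Proof. by apply: val_inj; rewrite /= fgw_of_word. Qed.

Lemma fgmulA : associative (@fgmul n).
Proof. by move=> g h k; rewrite -[g]fgwK -[h]fgwK -[k]fgwK -!fg_of_word_cat catA. Qed.

Lemma fgmul1g : left_id 1 (@fgmul n).
Proof. by move=> g; rewrite -fg_of_word_nil -[g]fgwK -fg_of_word_cat. Qed.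

Lemma fgmulg1 : right_id 1 (@fgmul n).
Proof. by move=> g; rewrite -fg_of_word_nil -[g]fgwK -fg_of_word_cat cats0. Qed.

Definition fginv g := fg_of_word (word_inv (fgw g)).

Lemma fgmulgV g : g * fginv g = 1.
Proof.
rewrite -[g in g * _]fgwK -fg_of_word_cat -fg_of_word_norm.
by rewrite norm_cat_word_inv fg_of_word_nil.
Qed.

Lemma fgmulVg g : fginv g * g = 1.
Proof.
rewrite -[g in _ * g]fgwK -fg_of_word_cat -fg_of_word_norm.
by rewrite -{2}[fgw g]word_invK norm_cat_word_inv fg_of_word_nil.
Qed.

Lemma fginv_unique g h : g * h = 1 -> h = fginv g.
Proof. by move=> gh1; rewrite -[h]fgmul1g -(fgmulVg g) -fgmulA gh1 fgmulg1. Qed.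

Lemma fgw_gen (i : 'I_n) : fgw (gen i) = [:: (i, false)].
Proof. by rewrite -[gen i]/(fg_of_word [:: (i, false)]) fgw_of_word. Qed.

Lemma fg_of_word_letter x :
  fg_of_word [:: x] = if x.2 then fginv (gen x.1) else gen x.1.
Proof. by case: x => i [] //=; apply: val_inj; rewrite /= !fgw_of_word fgw_gen. Qed.

Section Morphism.
Variable f : FG n -> FG n.
Hypothesis fM : {morph f : g h / g * h}.

Lemma fg_morph1 : f 1 = 1.
Proof.
set e := f 1; have ee : e * e = e by rewrite -fM fgmul1g.
by rewrite -[LHS]fgmulg1 -{1}(fgmulgV e) fgmulA ee fgmulgV.
Qed.

Lemma fg_morphV g : f (fginv g) = fginv (f g).
Proof. by apply: fginv_unique; rewrite -fM fgmulgV fg_morph1. Qed.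

End Morphism.

Lemma fg_morph_eq (f1 f2 : FG n -> FG n) :
  {morph f1 : g h / g * h} -> {morph f2 : g h / g * h} ->
  (forall i, f1 (gen i) = f2 (gen i)) -> f1 =1 f2.
Proof.
move=> f1M f2M eq_gen g; rewrite -[g]fgwK.
elim: (fgw g) => [|x w IHw]; first by rewrite fg_of_word_nil !fg_morph1.
rewrite -cat1s fg_of_word_cat f1M f2M IHw fg_of_word_letter.
by case: x.2; rewrite ?fg_morphV // eq_gen.
Qed.

Lemma is_aut_comp (f1 f2 : FG n -> FG n) : is_aut f1 -> is_aut f2 -> is_aut (f1 \o f2).
Proof.
move=> [f1M f1_bij] [f2M f2_bij]; split; last exact: bij_comp.
by move=> g h /=; rewrite f2M f1M.
Qed.

Section Relabelling.
Variable s : {perm 'I_n}.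

Definition relabel x : letter n := (s x.1, x.2).

Lemma push_relabel x w : push (relabel x) (map relabel w) = map relabel (push x w).
Proof.
rewrite !pushE; case: w => // y t /=.
have -> : (relabel y == letter_inv (relabel x)) = (y == letter_inv x).
  by case: x y => [i b] [j c]; rewrite /= !xpair_eqE (inj_eq perm_inj).
by case: ifP.
Qed.

Lemma norm_relabel w : norm (map relabel w) = map relabel (norm w).
Proof. by elim: w => //= x w ->; rewrite push_relabel. Qed.

Definition fg_perm g := fg_of_word (map relabel (fgw g)).

Lemma fg_perm_morph : {morph fg_perm : g h / g * h}.
Proof.
move=> g h; rewrite /fg_perm fgw_mul -norm_relabel fg_of_word_norm map_cat.
exact: fg_of_word_cat.
Qed.

Lemma fg_perm_gen i : fg_perm (gen i) = gen (s i).
Proof. by rewrite /fg_perm fgw_gen. Qed.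

End Relabelling.

Lemma fg_perm_can (s t : {perm 'I_n}) : cancel s t -> cancel (fg_perm s) (fg_perm t).
Proof.
move=> st g; rewrite /fg_perm fgw_of_word norm_relabel norm_reduced ?reduced_fgw //.
by rewrite (mapK (_ : cancel (relabel s) (relabel t))) ?fgwK // => -[i b]; rewrite /relabel /= st.
Qed.

Lemma is_aut_fg_perm s : is_aut (fg_perm s).
Proof.
split; first exact: fg_perm_morph.
by exists (fg_perm s^-1); apply: fg_perm_can; [apply: permK | apply: permKV].
Qed.

Definition perm_conj s f := fg_perm s \o f \o fg_perm s^-1.

Lemma perm_conj_comp s f : perm_conj s f \o fg_perm s = fg_perm s \o f.
Proof.
by apply: functional_extensionality => g; rewrite /perm_conj /= (fg_perm_can (permK s)).
Qed.

Definition side_mul (b : bool) g h := if b then h * g else g * h.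

Lemma side_mulA b : associative (side_mul b).
Proof. by case: b => x y z; rewrite /= fgmulA. Qed.

Lemma fg_morph_side_mul f b g h :
  {morph f : g h / g * h} -> f (side_mul b g h) = side_mul b (f g) (f h).
Proof. by move=> fM; case: b; rewrite /side_mul fM. Qed.

(* [transvection false i j] is A_ij and [transvection true i j] is B_ij. *)
Definition transvection (b : bool) (i j : 'I_n) f := [/\ is_aut f,
  f (gen i) = side_mul b (gen i) (gen j) & forall m, m != i -> f (gen m) = gen m].

Lemma perm_conj_transvection s b i j f :
  transvection b i j f -> transvection b (s i) (s j) (perm_conj s f).
Proof.
case=> aut_f fi fm; split.
- exact: is_aut_comp (is_aut_comp (is_aut_fg_perm s) aut_f) (is_aut_fg_perm s^-1).
- rewrite /perm_conj /= (fg_perm_gen s^-1) permK fi.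
  by rewrite (fg_morph_side_mul _ _ _ (fg_perm_morph s)) !(fg_perm_gen s).
- move=> m m_si; rewrite /perm_conj /= (fg_perm_gen s^-1) fm ?(fg_perm_gen s) ?permKV //.
  by apply: contra m_si => /eqP <-; rewrite permKV.
Qed.

Lemma transvections_commute b i j k (f g : FG n -> FG n) : i != j -> i != k -> j != k ->
  transvection b i j f -> transvection b k j g -> f \o g = g \o f.
Proof.
move=> ij ik jk [aut_f fi fm] [aut_g gk gm].
have [ji ki kj] : [/\ j != i, k != i & k != j] by split; rewrite eq_sym.
apply: functional_extensionality; apply: fg_morph_eq.
- exact: (is_aut_comp aut_f aut_g).1.
- exact: (is_aut_comp aut_g aut_f).1.
move=> m /=; case: (eqVneq m i) => [->|mi].
  by rewrite gm // fi fg_morph_side_mul ?gm //; case: aut_g.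
case: (eqVneq m k) => [->|mk]; last by rewrite gm // fm // gm.
by rewrite fm // gk fg_morph_side_mul ?fm //; case: aut_f.
Qed.

Lemma transvection_relation b i j k (f g h : FG n -> FG n) : i != j -> i != k -> j != k ->
  transvection b i j f -> transvection b k j g -> transvection b k i h ->
  h \o (f \o g) = f \o h.
Proof.
move=> ij ik jk [aut_f fi fm] [aut_g gk gm] [aut_h hk hm].
have [ji ki kj] : [/\ j != i, k != i & k != j] by split; rewrite eq_sym.
have [[fM _] [hM _]] := (aut_f, aut_h).
apply: functional_extensionality; apply: fg_morph_eq.
- exact: (is_aut_comp aut_h (is_aut_comp aut_f aut_g)).1.
- exact: (is_aut_comp aut_f aut_h).1.
move=> m /=; case: (eqVneq m i) => [->|mi].
  by rewrite gm // hm // fi (fg_morph_side_mul _ _ _ hM) !hm.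
case: (eqVneq m j) => [->|mj]; first by rewrite gm // fm // hm // fm.
case: (eqVneq m k) => [->|mk]; last by rewrite gm // fm // hm // fm.
rewrite gk hk !(fg_morph_side_mul _ _ _ fM) fm // fm // (fg_morph_side_mul _ _ _ hM).
by rewrite hk hm // fi side_mulA.
Qed.

End FreeGroup.

Lemma exists_ord_neq2 n (i j : 'I_n) : (2 < n)%N -> exists k : 'I_n, (k != i) && (k != j).
Proof.
move=> n_gt2; apply/existsP; apply: contraTT n_gt2 => /existsPn none.
have sub_ij : [set: 'I_n] \subset [set i; j].
  by apply/subsetP => k _; move: (none k); rewrite !inE negb_and !negbK orbC.
rewrite -leqNgt -[n]card_ord -cardsT (leq_trans (subset_leq_card sub_ij)) //.
by rewrite cards2; case: (_ != _).
Qed.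

Lemma iter_comp_commute (T : Type) (a b : T -> T) :
  a \o b =1 b \o a -> forall N x, iter N (a \o b) x = iter N a (iter N b x).
Proof.
move=> ab; have iter_a_b N x : iter N a (b x) = b (iter N a x).
  by elim: N => //= N ->; rewrite -[a (b _)]/((a \o b) _) ab.
by elim=> //= N IHN x; rewrite IHN iter_a_b.
Qed.

Open Scope R_scope.

Definition monotone_lift (h : R -> R) :=
  (forall x y, x <= y -> h x <= h y) /\ (forall x, h (x + 1) = h x + 1).

(* [h1] and [h2] lift the same circle map. *)
Definition eq_modZ (h1 h2 : R -> R) := exists k : Z, forall x, h1 x = h2 x + IZR k.

Section Lifts.
Implicit Types (a b h : R -> R).

Lemma lift_addn h (m : nat) x : monotone_lift h -> h (x + INR m) = h x + INR m.
Proof.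
case=> _ h1; elim: m => [|m IHm]; first by rewrite /= !Rplus_0_r.
by rewrite S_INR -Rplus_assoc h1 IHm; ring.
Qed.

Lemma lift_addZ h (m : Z) x : monotone_lift h -> h (x + IZR m) = h x + IZR m.
Proof.
move=> hl; case: (Z_le_gt_dec 0 m) => m0.
  by rewrite -(Z2Nat.id m) // -INR_IZR_INZ lift_addn.
have := lift_addn (Z.to_nat (- m)) (x + IZR m) hl.
rewrite INR_IZR_INZ Z2Nat.id ?opp_IZR; last lia.
by rewrite Rplus_assoc Rplus_opp_r Rplus_0_r => ->; ring.
Qed.

Lemma lift_iter h N : monotone_lift h -> monotone_lift (iter N h).
Proof.
case=> h_mono h1; elim: N => [|N [IH_mono IH1]] //=.
by split=> [x y le_xy|x] /=; [apply/h_mono/IH_mono | rewrite IH1 h1].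
Qed.

Lemma lift_disp_le1 h x y : monotone_lift h -> Rabs ((h y - y) - (h x - x)) <= 1.
Proof.
move=> hl; have [h_mono h1] := hl.
have [up_gt up_le] := archimed (y - x).
pose m := (up (y - x) - 1)%Z; pose t := y - x - IZR m.
have t01 : 0 <= t < 1 by rewrite /t /m minus_IZR; lra.
have le1 : h x <= h (x + t) by apply: h_mono; lra.
have le2 : h (x + t) <= h x + 1 by rewrite -h1; apply: h_mono; lra.
have -> : y = x + t + IZR m by rewrite /t; ring.
by rewrite (lift_addZ _ _ hl); apply/Rabs_le_between; split; lra.
Qed.

Lemma iter_semiconj h g f (k : Z) N x : monotone_lift f ->
  (forall x, h (g x) = f (h x) + IZR k) -> h (iter N g x) = iter N f (h x) + INR N * IZR k.
Proof.
move=> fl hgf; elim: N => [|N IHN]; first by rewrite /= Rmult_0_l Rplus_0_r.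
rewrite !iterS hgf IHN S_INR.
have := lift_addZ (Z.of_nat N * k) (iter N f (h x)) fl.
by rewrite mult_IZR -INR_IZR_INZ => ->; ring.
Qed.

Lemma semiconj_iter_bound h g f (k : Z) N : monotone_lift h -> monotone_lift f ->
  (forall x, h (g x) = f (h x) + IZR k) ->
  Rabs (iter N g 0 - iter N f 0 - INR N * IZR k) <= 2.
Proof.
move=> hl fl hgf.
have /Rabs_le_between := lift_disp_le1 0 (iter N g 0) hl.
have /Rabs_le_between := lift_disp_le1 0 (h 0) (lift_iter N fl).
by rewrite (iter_semiconj _ _ fl hgf) => ? ?; apply/Rabs_le_between; lra.
Qed.

Lemma commute_iter_bound a b N : monotone_lift a -> a \o b =1 b \o a ->
  Rabs (iter N (a \o b) 0 - iter N a 0 - iter N b 0) <= 1.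
Proof.
move=> al ab; rewrite iter_comp_commute //.
have /Rabs_le_between := lift_disp_le1 0 (iter N b 0) (lift_iter N al).
by move=> ?; apply/Rabs_le_between; lra.
Qed.

(* Iterating N times turns the shift k into N k, which the displacement bounds keep within
   2; N = 3 suffices. *)
Lemma lift_commute_modZ a b : monotone_lift a -> monotone_lift b ->
  eq_modZ (a \o b) (b \o a) -> a \o b =1 b \o a.
Proof.
move=> al bl [k abk].
suff k0 : k = 0%Z by move=> x; rewrite abk k0 Rplus_0_r.
have ba x : b (a x) = a (b x) + IZR (- k) by have /= := abk x; rewrite opp_IZR; lra.
have := iter_semiconj 3 0 al ba; rewrite opp_IZR /= => a3.
have /Rabs_le_between := lift_disp_le1 0 (iter 3 a 0) bl.
have /Rabs_le_between := lift_disp_le1 0 (b 0) (lift_iter 3 al).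
rewrite /= in a3 * => ? ?.
have : (-1 < k < 1)%Z by split; apply: lt_IZR; lra.
lia.
Qed.

Lemma lift_gap a : monotone_lift a -> continuity a -> ~ circ_fixed_point a ->
  exists (p : Z) d, 0 < d /\ forall x, IZR p + d <= a x - x <= IZR p + 1 - d.
Proof.
move=> al a_cont no_fix; pose g x := a x - x.
have g_cont : continuity g.
  exact: continuity_minus a_cont (derivable_continuous _ derivable_id).
have g_notZ x (k : Z) : g x <> IZR k.
  by move=> gxk; apply: no_fix; exists x, k; rewrite /g in gxk; lra.
have gZ x (m : Z) : g (x + IZR m) = g x by rewrite /g (lift_addZ _ _ al); ring.
have g_cont01 c : 0 <= c <= 1 -> continuity_pt g c by move=> _; apply: g_cont.
have [xm [g_min _]] := continuity_ab_min g 0 1 ltac:(lra) g_cont01.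
have [xM [g_max _]] := continuity_ab_maj g 0 1 ltac:(lra) g_cont01.
have [up_gt up_le] := archimed (g xm).
pose p := (up (g xm) - 1)%Z.
have p_lt : IZR p < g xm.
  have : IZR p <= g xm by rewrite /p minus_IZR; lra.
  by case/Rle_lt_or_eq_dec => // /esym /g_notZ.
have lt_p1 : g xM < IZR p + 1.
  apply: Rnot_le_lt => le_p1.
  have [|z [_ gz]] := IVT_gen g xm xM (IZR p + 1) g_cont.
    split; first by apply: Rle_trans (Rmin_l _ _) _; rewrite /p minus_IZR; lra.
    exact: Rle_trans le_p1 (Rmax_r _ _).
  by apply: (g_notZ z (p + 1)%Z); rewrite plus_IZR.
exists p, (Rmin (g xm - IZR p) (IZR p + 1 - g xM)); split; first by apply: Rmin_pos; lra.
move=> x; have [ux_gt ux_le] := archimed x.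
pose x' := x - IZR (up x - 1).
have x'01 : 0 <= x' <= 1 by rewrite /x' minus_IZR; lra.
have -> : a x - x = g x' by rewrite -(gZ x' (up x - 1)%Z) /x' Rplus_comm Rplus_minus.
have := g_min x' x'01; have := g_max x' x'01.
have := Rmin_l (g xm - IZR p) (IZR p + 1 - g xM).
have := Rmin_r (g xm - IZR p) (IZR p + 1 - g xM).
lra.
Qed.

Lemma fixed_point_of_bounded_drift a (q : Z) C : monotone_lift a -> continuity a ->
  (forall N, Rabs (iter N a 0 - INR N * IZR q) <= C) -> circ_fixed_point a.
Proof.
move=> al a_cont drift; apply: NNPP => no_fix.
have [p [d [d_pos gap]]] := lift_gap al a_cont no_fix.
have iter_gap N : INR N * (IZR p + d) <= iter N a 0 <= INR N * (IZR p + 1 - d).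
  elim: N => [|N IHN]; first by rewrite /= !Rmult_0_l; lra.
  by rewrite iterS S_INR; have := gap (iter N a 0); lra.
have [N N_gt] := INR_unbounded (C / d).
have N_d : C < INR N * d.
  have := Rmult_lt_compat_r _ _ _ d_pos N_gt.
  by rewrite /Rdiv Rmult_assoc Rinv_l ?Rmult_1_r //; lra.
have N_ge0 := pos_INR N.
have /Rabs_le_between := drift N; have := iter_gap N.
case: (Z_le_gt_dec q p) => [/IZR_le le_qp | /Z.gt_lt/Zlt_le_succ/IZR_le].
  by have := Rmult_le_compat_l _ _ _ N_ge0 le_qp; lra.
by rewrite succ_IZR => le_pq; have := Rmult_le_compat_l _ _ _ N_ge0 le_pq; lra.
Qed.

Lemma fixed_point_of_relations a b s c :
  monotone_lift a -> monotone_lift b -> monotone_lift s -> monotone_lift c -> continuity a ->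
  eq_modZ (a \o b) (b \o a) -> eq_modZ (s \o a) (b \o s) ->
  eq_modZ (c \o (a \o b)) (a \o c) -> circ_fixed_point a.
Proof.
move=> al bl sl cl a_cont ab_ba [k2 sa_bs] [k3 cab_ac].
have ab := lift_commute_modZ al bl ab_ba.
apply: (@fixed_point_of_bounded_drift _ (k2 + k3) 5) => // N.
have /Rabs_le_between := semiconj_iter_bound (h := s) (g := a) (f := b) N sl bl sa_bs.
have /Rabs_le_between := semiconj_iter_bound (h := c) (g := a \o b) (f := a) N cl al cab_ac.
have /Rabs_le_between := commute_iter_bound N al ab.
by rewrite plus_IZR => *; apply/Rabs_le_between; lra.
Qed.

End Lifts.

Lemma eq_modZ_sym h1 h2 : eq_modZ h1 h2 -> eq_modZ h2 h1.
Proof. by case=> k hk; exists (- k)%Z => x; rewrite hk opp_IZR; ring. Qed.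

Lemma eq_modZ_trans h1 h2 h3 : eq_modZ h1 h2 -> eq_modZ h2 h3 -> eq_modZ h1 h3.
Proof. by case=> k1 hk1 [k2 hk2]; exists (k1 + k2)%Z => x; rewrite hk1 hk2 plus_IZR; ring. Qed.

Lemma eq_modZ_compl h h1 h2 : monotone_lift h -> eq_modZ h1 h2 -> eq_modZ (h \o h1) (h \o h2).
Proof. by move=> hl [k hk]; exists k => x; rewrite /= hk (lift_addZ _ _ hl). Qed.

Lemma comp_eq_modZ n (phi : (FG n -> FG n) -> R -> R) f1 f2 g1 g2 :
  (forall f g, is_aut f -> is_aut g -> eq_modZ (phi (f \o g)) (phi f \o phi g)) ->
  is_aut f1 -> is_aut f2 -> is_aut g1 -> is_aut g2 ->
  f1 \o f2 = g1 \o g2 -> eq_modZ (phi f1 \o phi f2) (phi g1 \o phi g2).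
Proof.
move=> phi_comp af1 af2 ag1 ag2 f12_g12.
by apply: eq_modZ_trans (eq_modZ_sym (phi_comp _ _ af1 af2)) _; rewrite f12_g12; apply: phi_comp.
Qed.

Lemma diff2_lift_continuous h : diff2_lift h -> continuity h.
Proof. by case=> C2 _ x; apply/continuity_pt_filterlim/ex_derive_continuous; case: (C2 x). Qed.

Lemma diff2_lift_monotone h : diff2_lift h -> monotone_lift h.
Proof.
case=> C2 [h'_pos h1]; split=> // x y /Rle_lt_or_eq_dec [lt_xy|<-]; last exact: Rle_refl.
apply/Rlt_le/(@incr_function h m_infty p_infty (Derive h)) => // [z _ _|z _ _].
  by apply: Derive_correct; case: (C2 z).
exact: h'_pos.
Qed.

Lemma transvection_fixed_point n (phi : (FG n -> FG n) -> R -> R) b (i j k : 'I_n) f :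
  (forall f, is_aut f -> diff2_lift (phi f)) ->
  (forall f g, is_aut f -> is_aut g -> eq_modZ (phi (f \o g)) (phi f \o phi g)) ->
  i != j -> i != k -> j != k -> transvection b i j f -> circ_fixed_point (phi f).
Proof.
move=> phi_lift phi_comp ij ik jk tf; have [kj ki] : k != j /\ k != i by rewrite !(eq_sym k).
pose sg := fg_perm (tperm i k); pose bf := perm_conj (tperm i k) f.
pose cf := perm_conj (tperm j k) (perm_conj (tperm i j) f).
have tb : transvection b k j bf.
  by have := perm_conj_transvection (tperm i k) tf; rewrite tpermL tpermD.
have tc : transvection b k i cf.
  have := perm_conj_transvection (tperm j k) (perm_conj_transvection (tperm i j) tf).
  by rewrite tpermL tpermR tpermL tpermD // eq_sym.
have [[af _ _] [ab _ _] [ac _ _]] := And3 tf tb tc.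
have asg : is_aut sg := is_aut_fg_perm _.
have lift g : is_aut g -> monotone_lift (phi g) by move/phi_lift/diff2_lift_monotone.
apply: (fixed_point_of_relations (lift _ af) (lift _ ab) (lift _ asg) (lift _ ac)).
- exact/diff2_lift_continuous/phi_lift.
- exact: (comp_eq_modZ phi_comp af ab ab af (transvections_commute ij ik jk tf tb)).
- exact: (comp_eq_modZ phi_comp asg af ab asg (esym (perm_conj_comp _ f))).
apply: eq_modZ_trans (eq_modZ_compl (lift _ ac) (eq_modZ_sym (phi_comp _ _ af ab))) _.
exact: (comp_eq_modZ phi_comp ac (is_aut_comp af ab) af ac
         (transvection_relation ij ik jk tf tb tc)).
Qed.

Theorem lemma4p2 (n : nat) (Hn : (4 < n)%N)
  (phi : (FG n -> FG n) -> R -> R)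
  (Hlift : forall f, is_aut f -> diff2_lift (phi f))
  (Hhom : forall f g, is_aut f -> is_aut g ->
     exists k : Z, forall x, phi (f \o g) x = phi f (phi g x) + IZR k) :
  forall i j : 'I_n, i <> j ->
    (forall f, is_Aij i j f -> circ_fixed_point (phi f)) /\
    (forall f, is_Bij i j f -> circ_fixed_point (phi f)).
Proof.
move=> i j /eqP ij.
have [k /andP[ki kj]] := exists_ord_neq2 i j (ltnW (ltnW Hn)).
have fixed b f : transvection b i j f -> circ_fixed_point (phi f).
  by apply: (transvection_fixed_point (k := k)) Hlift Hhom ij _ _; rewrite eq_sym.
split=> f [af [fi fm]]; [apply: (fixed false) | apply: (fixed true)];
by split=> // m /eqP; apply: fm.
Qed.
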